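(* Let $H\in\mathbb{R}^{n\times n}$ and $M\in\mathbb{R}^{m\times m}$ be symmetric positive semidefinite, $A\in\mathbb{R}^{m\times n}$, $b\in\mathbb{R}^m$, $c,q,r\in\mathbb{R}^n$. Assume $(x,y,z)$ satisfies $Hx+c-A^Ty-z=0$ and $Ax+My-b=0$. Let $l$ be an index and $\mathcal{B},\mathcal{N}$ index sets such that $\mathcal{B}$, $\{l\}$, $\mathcal{N}$ are pairwise disjoint with union $\{1,\dots,n\}$, and $x_{\mathcal{N}}+q_{\mathcal{N}}=0$, $z_{\mathcal{B}}+r_{\mathcal{B}}=0$. If $(\Delta x,\Delta y,\Delta z)$ satisfies $H\Delta x-A^T\Delta y-\Delta z=0$, $A\Delta x+M\Delta y=0$, $\Delta x_{\mathcal{N}}=0$, $\Delta z_{\mathcal{B}}=0$, then for all $\alpha\in\mathbb{R}$ the functions \[ f_P(x,y)=\tfrac12x^THx+\tfrac12y^TMy+c^Tx+r^Tx,\qquad f_D(x,y,z)=-\tfrac12x^THx-\tfrac12y^TMy+b^Ty-q^Tz \] satisfy \[ f_P(x+\alpha\Delta x,y+\alpha\Delta y)=f_P(x,y)+\Delta x_l(z_l+r_l)\alpha+\tfrac12\Delta x_l\Delta z_l\alpha^2, \] \[ f_D(x+\alpha\Delta x,y+\alpha\Delta y,z+\alpha\Delta z)=f_D(x,y,z)-\Delta z_l(x_l+q_l)\alpha-\tfrac12\Delta x_l\Delta z_l\alpha^2. \]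
   Context: For an index set $S$ and a vector $w$, $w_S$ denotes the subvector of components of $w$ with indices in $S$. *)

From HB Require Import structures.
From mathcomp Require Import all_boot all_order all_algebra.
From mathcomp Require Import reals.
Set Implicit Arguments. Unset Strict Implicit. Unset Printing Implicit Defensive.
Import Order.TTheory GRing.Theory Num.Theory.
Local Open Scope ring_scope.

Definition dotv (R : realType) (n : nat) (u v : 'cV[R]_n) : R := (u^T *m v) 0 0.

Definition qform (R : realType) (n : nat) (H : 'M[R]_n) (x : 'cV[R]_n) : R :=
  (x^T *m H *m x) 0 0.

Definition psd (R : realType) (n : nat) (H : 'M[R]_n) : Prop :=
  H^T = H /\ forall v : 'cV[R]_n, 0 <= qform H v.

Definition fP (R : realType) (n m : nat) (H : 'M[R]_n) (M : 'M[R]_m)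
  (c r : 'cV[R]_n) (x : 'cV[R]_n) (y : 'cV[R]_m) : R :=
  2^-1 * qform H x + 2^-1 * qform M y + dotv c x + dotv r x.

Definition fD (R : realType) (n m : nat) (H : 'M[R]_n) (M : 'M[R]_m)
  (b : 'cV[R]_m) (q : 'cV[R]_n) (x : 'cV[R]_n) (y : 'cV[R]_m) (z : 'cV[R]_n) : R :=
  - (2^-1 * qform H x) - 2^-1 * qform M y + dotv b y - dotv q z.

(** Along the line (x, y, z) + alpha (dx, dy, dz) both objectives are quadratic
    polynomials in alpha. The linear equations force the primal slope to be
    dx^T (z + r) and the dual slope to be -dz^T (x + q), and the curvature
    dx^T H dx + dy^T M dy to be dx^T dz. The index partition makes all three
    inner products collapse to their l-th term: off l, either dx_i = 0 (i in N)
    or dz_i = 0 and z_i + r_i = 0 (i in B), while x_i + q_i = 0 on N. *)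

From HB Require Import structures.
From mathcomp Require Import all_boot all_order all_algebra.
From mathcomp Require Import reals.
From mathcomp Require Import ring.
Import Order.TTheory GRing.Theory Num.Theory.
Local Open Scope ring_scope.

Set Implicit Arguments. Unset Strict Implicit.

Section InnerProduct.
Variable R : realType.

Lemma dotvE (n : nat) (u v : 'cV[R]_n) : dotv u v = \sum_i u i 0 * v i 0.
Proof. by rewrite /dotv !mxE; apply: eq_bigr => i _; rewrite mxE. Qed.

Lemma dotvC (n : nat) (u v : 'cV[R]_n) : dotv u v = dotv v u.
Proof. by rewrite !dotvE; apply: eq_bigr => i _; rewrite mulrC. Qed.

Lemma dotvDr (n : nat) (u v w : 'cV[R]_n) : dotv u (v + w) = dotv u v + dotv u w.
Proof. by rewrite /dotv mulmxDr mxE. Qed.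

Lemma dotvDl (n : nat) (u v w : 'cV[R]_n) : dotv (v + w) u = dotv v u + dotv w u.
Proof. by rewrite !(dotvC _ u) dotvDr. Qed.

Lemma dotvNr (n : nat) (u v : 'cV[R]_n) : dotv u (- v) = - dotv u v.
Proof. by rewrite /dotv mulmxN mxE. Qed.

Lemma dotvNl (n : nat) (u v : 'cV[R]_n) : dotv (- v) u = - dotv v u.
Proof. by rewrite !(dotvC _ u) dotvNr. Qed.

Lemma dotvZr (n : nat) (a : R) (u v : 'cV[R]_n) : dotv u (a *: v) = a * dotv u v.
Proof. by rewrite /dotv -scalemxAr mxE. Qed.

Lemma dotvZl (n : nat) (a : R) (u v : 'cV[R]_n) : dotv (a *: v) u = a * dotv v u.
Proof. by rewrite !(dotvC _ u) dotvZr. Qed.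

Lemma dotv_mulmx (k n : nat) (P : 'M[R]_(k, n)) (u : 'cV[R]_k) (v : 'cV[R]_n) :
  dotv u (P *m v) = dotv (P^T *m u) v.
Proof. by rewrite /dotv trmx_mul trmxK mulmxA. Qed.

Lemma dotv_sym_mulmx (n : nat) (P : 'M[R]_n) (u v : 'cV[R]_n) :
  P^T = P -> dotv u (P *m v) = dotv v (P *m u).
Proof. by move=> PT; rewrite dotv_mulmx PT dotvC. Qed.

Lemma dotv_single_support (n : nat) (l : 'I_n) (u v : 'cV[R]_n) :
  (forall i, i != l -> u i 0 = 0 \/ v i 0 = 0) -> dotv u v = u l 0 * v l 0.
Proof.
move=> uv0; rewrite dotvE (bigD1 l) //= big1 ?addr0 // => i /uv0 [->|->].
  by rewrite mul0r.
by rewrite mulr0.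
Qed.

Lemma qform_line (n : nat) (P : 'M[R]_n) (x d : 'cV[R]_n) (a : R) :
  P^T = P ->
  qform P (x + a *: d) = qform P x + 2 * a * dotv d (P *m x) + a ^+ 2 * qform P d.
Proof.
move=> PT; have qformE u : qform P u = dotv u (P *m u) by rewrite /dotv mulmxA.
rewrite !qformE mulmxDr -scalemxAr !(dotvDl, dotvDr, dotvZl, dotvZr).
rewrite (dotv_sym_mulmx x d PT); ring.
Qed.

End InnerProduct.

Section ObjectivesAlongLine.
Variables (R : realType) (n m : nat).
Variables (H : 'M[R]_n) (M : 'M[R]_m).
Hypotheses (HT : H^T = H) (MT : M^T = M).
Variables (x dx : 'cV[R]_n) (y dy : 'cV[R]_m) (a : R).

Lemma fP_line (c r : 'cV[R]_n) :
  fP H M c r (x + a *: dx) (y + a *: dy) = fP H M c r x y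
    + a * (dotv dx (H *m x) + dotv dy (M *m y) + dotv dx (c + r))
    + 2^-1 * a ^+ 2 * (qform H dx + qform M dy).
Proof.
rewrite /fP !qform_line // !(dotvDr, dotvZr) !(dotvC _ dx).
by field; rewrite ?pnatr_eq0.
Qed.

Lemma fD_line (b : 'cV[R]_m) (q z dz : 'cV[R]_n) :
  fD H M b q (x + a *: dx) (y + a *: dy) (z + a *: dz) = fD H M b q x y z
    - a * (dotv dx (H *m x) + dotv dy (M *m y) - dotv b dy + dotv q dz)
    - 2^-1 * a ^+ 2 * (qform H dx + qform M dy).
Proof.
rewrite /fD !qform_line // !(dotvDr, dotvZr).
by field; rewrite ?pnatr_eq0.
Qed.

End ObjectivesAlongLine.
Section LinearizedKKT.
Variables (R : realType) (n m : nat).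
Variables (H : 'M[R]_n) (M : 'M[R]_m) (A : 'M[R]_(m, n)) (b : 'cV[R]_m).
Variables (c q r x z dx dz : 'cV[R]_n) (y dy : 'cV[R]_m).
Hypotheses (HT : H^T = H) (MT : M^T = M).
Hypothesis stationary : H *m x + c - A^T *m y - z = 0.
Hypothesis feasible : A *m x + M *m y - b = 0.
Hypothesis stationary_dir : H *m dx - A^T *m dy - dz = 0.
Hypothesis feasible_dir : A *m dx + M *m dy = 0.

Let eq_z : z = H *m x + c - A^T *m y.
Proof. by apply/eqP; rewrite eq_sym -subr_eq0 stationary. Qed.

Let eq_b : b = A *m x + M *m y.
Proof. by apply/eqP; rewrite eq_sym -subr_eq0 feasible. Qed.

Let eq_dz : dz = H *m dx - A^T *m dy.
Proof. by apply/eqP; rewrite eq_sym -subr_eq0 stationary_dir. Qed.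

Let eq_Mdy : M *m dy = - (A *m dx).
Proof. by apply/eqP; rewrite -addr_eq0 addrC feasible_dir. Qed.

Lemma primal_slope :
  dotv dx (H *m x) + dotv dy (M *m y) + dotv dx (c + r) = dotv dx (z + r).
Proof.
rewrite eq_z (dotv_sym_mulmx _ _ MT) eq_Mdy dotvNr (dotv_mulmx A) (dotvC _ dx).
by rewrite !(dotvDr, dotvNr); ring.
Qed.

Lemma dual_slope :
  dotv dx (H *m x) + dotv dy (M *m y) - dotv b dy + dotv q dz = dotv dz (x + q).
Proof.
rewrite eq_b eq_dz !(dotvDl, dotvDr, dotvNl, dotvNr).
rewrite (dotvC (A *m x)) (dotv_mulmx A) (dotvC (M *m y)) (dotvC (H *m dx) x).
rewrite (dotv_sym_mulmx x _ HT) !(dotvC q); ring.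
Qed.

Lemma curvature_eq : qform H dx + qform M dy = dotv dx dz.
Proof.
rewrite /qform -!mulmxA -!/(dotv _ _) eq_dz eq_Mdy dotvNr.
by rewrite (dotv_mulmx A) (dotvC _ dx) dotvDr dotvNr.
Qed.

End LinearizedKKT.


Theorem proposition11 (R : realType) (n m : nat)
  (H : 'M[R]_n) (M : 'M[R]_m) (A : 'M[R]_(m, n)) (b : 'cV[R]_m)
  (c q r : 'cV[R]_n) (x : 'cV[R]_n) (y : 'cV[R]_m) (z : 'cV[R]_n)
  (l : 'I_n) (B N : {set 'I_n})
  (dx : 'cV[R]_n) (dy : 'cV[R]_m) (dz : 'cV[R]_n) :
  psd H -> psd M ->
  H *m x + c - A^T *m y - z = 0 ->
  A *m x + M *m y - b = 0 ->
  [disjoint B & [set l]] -> [disjoint B & N] -> [disjoint [set l] & N] ->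
  B :|: [set l] :|: N = [set: 'I_n] ->
  (forall i, i \in N -> x i 0 + q i 0 = 0) ->
  (forall i, i \in B -> z i 0 + r i 0 = 0) ->
  H *m dx - A^T *m dy - dz = 0 ->
  A *m dx + M *m dy = 0 ->
  (forall i, i \in N -> dx i 0 = 0) ->
  (forall i, i \in B -> dz i 0 = 0) ->
  forall alpha : R,
    fP H M c r (x + alpha *: dx) (y + alpha *: dy)
      = fP H M c r x y + dx l 0 * (z l 0 + r l 0) * alpha
        + 2^-1 * dx l 0 * dz l 0 * alpha ^+ 2
    /\
    fD H M b q (x + alpha *: dx) (y + alpha *: dy) (z + alpha *: dz)
      = fD H M b q x y z - dz l 0 * (x l 0 + q l 0) * alpha
        - 2^-1 * dx l 0 * dz l 0 * alpha ^+ 2.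
Proof.
move=> [HT _] [MT _] stat feas _ _ _ cover xqN zrB stat_dir feas_dir dxN dzB a.
have off_l i : i != l -> (i \in B) || (i \in N).
  by move=> il; move: (in_setT i); rewrite -cover !inE (negbTE il) orbF.
have dx_zr : dotv dx (z + r) = dx l 0 * (z l 0 + r l 0).
  rewrite (dotv_single_support (l := l)) ?mxE // => i /off_l /orP[iB|iN].
    by right; rewrite !mxE zrB.
  by left; rewrite dxN.
have dz_xq : dotv dz (x + q) = dz l 0 * (x l 0 + q l 0).
  rewrite (dotv_single_support (l := l)) ?mxE // => i /off_l /orP[iB|iN].
    by left; rewrite dzB.
  by right; rewrite !mxE xqN.
have dx_dz : dotv dx dz = dx l 0 * dz l 0.
  apply: dotv_single_support => i /off_l /orP[iB|iN].
    by right; rewrite dzB.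
  by left; rewrite dxN.
rewrite fP_line // fD_line // (primal_slope r MT stat feas_dir).
rewrite (dual_slope q HT feas stat_dir) (curvature_eq stat_dir feas_dir).
by rewrite dx_zr dz_xq dx_dz; split; ring.
Qed.
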